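(* Let $G=(V,E)$ be an undirected graph with $V=\{v_1,\ldots,v_n\}$, $n\geq 3$, and let $r,g,b$ be three distinct constants. For $1\leq i<j\leq n$ let $r_{ij}=\{(x,y)\in\{r,g,b\}^2 : x\neq y\}$ if $\{v_i,v_j\}\in E$ and $r_{ij}=\{r,g,b\}^2$ otherwise. Let $\rho$ be the constraint with scope $(X_1,\ldots,X_n)$ whose relation contains, for each pair $i<j$ and each $(x,y)\in r_{ij}$, exactly one tuple $t$ with $t[X_i]=x$, $t[X_j]=y$ and $t[X_\ell]=d_t$ for all $\ell\notin\{i,j\}$, where the constants $d_t$ are pairwise distinct, distinct from $r,g,b$, and each $d_t$ occurs only in the tuple $t$ (and nothing else is in the relation). Then $sol(\Pi_{S_2}(\rho))\neq\rho$ if and only if $G$ is 3-colorable.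
   Context: For a constraint $\rho$ and a set $W$ of its variables, $\Pi_W(\rho)$ is the projection of $\rho$ onto $W$. $S_2$ is the set of all nonempty subsets of the variables of $\rho$ of size at most $2$, and $\Pi_{S_2}(\rho)$ is the constraint network over the variables of $\rho$ with constraints $\Pi_W(\rho)$ for $W\in S_2$. For a network $N$, $sol(N)$ is the set of assignments to all variables whose restriction to every constraint scope lies in the corresponding relation (the natural join of the relations). A graph is 3-colorable if there is a map $V\to\{r,g,b\}$ assigning distinct colors to the endpoints of every edge. *)

From HB Require Import structures.
From mathcomp Require Import all_boot.
Set Implicit Arguments. Unset Strict Implicit. Unset Printing Implicit Defensive.

Inductive color := Cr | Cg | Cb.
Definition color_eqb (x y : color) : bool :=
  match x, y with Cr, Cr | Cg, Cg | Cb, Cb => true | _, _ => false end.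
Lemma color_eqP : Equality.axiom color_eqb.
Proof. by case; case; constructor. Qed.
HB.instance Definition _ := hasDecEq.Build color color_eqP.

Definition simple_graph (n : nat) (e : rel 'I_n) : Prop :=
  symmetric e /\ irreflexive e.

Definition three_colorable (n : nat) (e : rel 'I_n) : Prop :=
  exists f : 'I_n -> color, forall u v, e u v -> f u != f v.

(* A constraint over variables X_1..X_n (indexed by 'I_n) with values in D:
   its relation is a set of tuples (total assignments 'I_n -> D). *)
Definition relation (n : nat) (D : Type) := ('I_n -> D) -> Prop.

(* Pi_W(rho), represented as the set of assignments whose restriction to W
   is the restriction to W of some tuple of rho. *)
Definition proj (n : nat) (D : Type) (rho : relation n D) (W : {set 'I_n})
  (a : 'I_n -> D) : Prop :=
  exists t, rho t /\ forall l, l \in W -> a l = t l.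

Definition S2 (n : nat) : {set {set 'I_n}} :=
  [set W : {set 'I_n} | (0 < #|W|) && (#|W| <= 2)].

Definition sol_PiS2 (n : nat) (D : Type) (rho : relation n D) (a : 'I_n -> D)
  : Prop := forall W, W \in S2 n -> proj rho W a.

Definition r_ij (n : nat) (e : rel 'I_n) (i j : 'I_n) (x y : color) : bool :=
  if e i j then x != y else true.

Definition valid_idx (n : nat) (e : rel 'I_n) (i j : 'I_n) (x y : color) : Prop :=
  (i < j)%N /\ r_ij e i j x y.

Definition rho_G (n : nat) (D : Type) (e : rel 'I_n) (col : color -> D)
  (d : 'I_n -> 'I_n -> color -> color -> D) : relation n D :=
  fun t => exists i j x y, valid_idx e i j x y /\
    forall l, t l = (if l == i then col x else if l == j then col y
                     else d i j x y).

(* An assignment in sol(Pi_{S_2}(rho)) is pinned down pairwise by tuples of rho.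
   If one of its values is a fresh constant d_t, that constant occurs only in t,
   so every pair through that position is realised by t itself and the
   assignment is t. Hence an assignment in sol but not in rho takes only colour
   values, and realising the edges {u,v} forces it to be a proper 3-colouring.
   Conversely a proper colouring lies in sol (each pair is realised by the
   tuple indexed by that pair and its colours), but not in rho, since every
   tuple of rho has a fresh constant at one of its (at least three) positions. *)

From Stdlib Require Import Classical ClassicalEpsilon.
From mathcomp Require Import all_boot.

Set Implicit Arguments. Unset Strict Implicit. Unset Printing Implicit Defensive.

Lemma subset_set2_of_card_le2 (T : finType) (W : {set T}) :
  (0 < #|W| <= 2)%N -> exists u v, W \subset [set u; v].
Proof.
case/andP=> /card_gt0P [u uW] W_le2; exists u.
have [Wu_0 | [v vWu]] := set_0Vmem (W :\ u).
  exists u; apply/subsetP=> w wW; rewrite !inE orbb.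
  apply: contraT => wu; have : w \in W :\ u by rewrite !inE wu.
  by rewrite Wu_0 inE.
exists v; apply/subsetP=> w wW; rewrite !inE.
have : #|W :\ u| <= 1 by move: W_le2; rewrite (cardsD1 u W) uW.
move/card_le1_eqP/(_ w v) => eq_wv.
by case: (eqVneq w u) => //= wu; rewrite eq_wv // !inE wu.
Qed.

Lemma exists_notin_set2 (T : finType) (i j : T) :
  (2 < #|T|)%N -> exists l, l \notin [set i; j].
Proof.
move=> T_gt2; apply/existsP; rewrite -negb_forall; apply: contraTN T_gt2 => /forallP ij_all.
have : (#|T| <= #|[set i; j]|)%N.
  by rewrite -cardsT; apply/subset_leq_card/subsetP=> w _; apply: ij_all.
by rewrite cards2 -ltnNge ltnS => /leq_trans; apply; exact: leq_b1.
Qed.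

Section PairwiseSolutions.

Variables (n : nat) (D : Type) (rho : relation n D).

Lemma sol_PiS2P (a : 'I_n -> D) :
  sol_PiS2 rho a <-> forall u v, exists2 t, rho t & t u = a u /\ t v = a v.
Proof.
split=> [a_sol u v | a_pairs W].
  have uv_S2 : [set u; v] \in S2 n by rewrite inE cards2 /= ltnS leq_b1.
  have [t [rho_t t_a]] := a_sol _ uv_S2.
  by exists t => //; split; apply/esym/t_a; rewrite !inE eqxx ?orbT.
rewrite inE => /subset_set2_of_card_le2 [u [v /subsetP W_uv]].
have [t rho_t [tu tv]] := a_pairs u v.
by exists t; split=> // l /W_uv; rewrite !inE => /orP [] /eqP ->.
Qed.

Lemma sol_PiS2_of_rel (a : 'I_n -> D) : rho a -> sol_PiS2 rho a.
Proof. by move=> rho_a W _; exists a. Qed.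

Lemma sol_PiS2_eq_tuple (a : 'I_n -> D) (l : 'I_n) :
  sol_PiS2 rho a ->
  (forall t t', rho t -> rho t' -> t l = a l -> t' l = a l -> t =1 t') ->
  exists2 t, rho t & a =1 t.
Proof.
move=> /sol_PiS2P a_pairs key.
have [t rho_t [tl _]] := a_pairs l l.
exists t => // m; have [t' rho_t' [t'l t'm]] := a_pairs l m.
by rewrite -t'm (key t' t).
Qed.

End PairwiseSolutions.

Section ConstraintOfGraph.

Variables (n : nat) (e : rel 'I_n) (D : Type).
Variables (col : color -> D) (d : 'I_n -> 'I_n -> color -> color -> D).
Hypothesis col_inj : injective col.
Hypothesis d_inj : forall i j x y i' j' x' y',
  valid_idx e i j x y -> valid_idx e i' j' x' y' ->
  d i j x y = d i' j' x' y' -> (i, j, x, y) = (i', j', x', y').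
Hypothesis d_fresh : forall i j x y c, valid_idx e i j x y -> d i j x y <> col c.

Local Notation rho := (rho_G e col d).

Definition rho_tuple (i j : 'I_n) (x y : color) (l : 'I_n) : D :=
  if l == i then col x else if l == j then col y else d i j x y.

Lemma rho_GE t :
  rho t <-> exists i j x y, valid_idx e i j x y /\ t =1 rho_tuple i j x y.
Proof. by []. Qed.

Lemma rho_G_ext t t' : t =1 t' -> rho t' -> rho t.
Proof.
move=> tt' /rho_GE [i [j [x [y [v t'E]]]]].
by exists i, j, x, y; split=> // l; rewrite tt' t'E.
Qed.

Lemma rho_tuple_colour i j x y l c :
  valid_idx e i j x y -> rho_tuple i j x y l = col c ->
  (l = i /\ c = x) \/ (l = j /\ c = y).
Proof.
rewrite /rho_tuple => v; case: eqP => [-> /col_inj -> | _]; first by left.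
case: eqP => [-> /col_inj -> | _]; first by right.
by move/d_fresh: v => /[apply].
Qed.

Lemma rho_tuple_fresh i j x y l :
  valid_idx e i j x y -> l != i -> l != j -> forall c, rho_tuple i j x y l <> col c.
Proof.
by move=> v li lj c; rewrite /rho_tuple (negbTE li) (negbTE lj); apply: d_fresh.
Qed.

Lemma rho_G_fresh_position t :
  (3 <= n)%N -> rho t -> exists l, forall c, t l <> col c.
Proof.
move=> n3 /rho_GE [i [j [x [y [v tE]]]]].
have [l] : exists l, l \notin [set i; j] by apply: exists_notin_set2; rewrite card_ord.
rewrite !inE negb_or => /andP [li lj].
by exists l => c; rewrite tE; apply: rho_tuple_fresh.
Qed.

Lemma rho_tuple_colour_pair (i j u v : 'I_n) (x y x' y' : color) :
  valid_idx e i j x y -> (u < v)%N ->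
  rho_tuple i j x y u = col x' -> rho_tuple i j x y v = col y' ->
  r_ij e u v x' y'.
Proof.
move=> ij_valid uv /(rho_tuple_colour ij_valid) u_ij /(rho_tuple_colour ij_valid) v_ij.
have [i_lt_j r_xy] := ij_valid.
move: uv; case: u_ij v_ij => [] [-> ->] [] [-> ->]; rewrite ?ltnn // => j_lt_i.
by have := ltn_trans j_lt_i i_lt_j; rewrite ltnn.
Qed.

Lemma rho_G_colour_pair t (u v : 'I_n) x y :
  (u < v)%N -> rho t -> t u = col x -> t v = col y -> r_ij e u v x y.
Proof.
move=> uv /rho_GE [i [j [x0 [y0 [ij_valid tE]]]]]; rewrite !tE.
exact: rho_tuple_colour_pair.
Qed.

Lemma rho_tuple_fresh_value i j x y l :
  (forall c, rho_tuple i j x y l <> col c) -> rho_tuple i j x y l = d i j x y.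
Proof.
rewrite /rho_tuple; case: eqP => [_ /(_ x) | _]; first by [].
by case: eqP => [_ /(_ y) | _].
Qed.

Lemma rho_G_fresh_key t t' l :
  rho t -> rho t' -> t l = t' l -> (forall c, t l <> col c) -> t =1 t'.
Proof.
move=> /rho_GE [i [j [x [y [v tE]]]]] /rho_GE [i' [j' [x' [y' [v' t'E]]]]].
rewrite tE t'E => tt' fresh.
have fresh' : forall c, rho_tuple i' j' x' y' l <> col c by rewrite -tt'.
move: tt'; rewrite (rho_tuple_fresh_value fresh) (rho_tuple_fresh_value fresh').
by move=> /(d_inj v v') same_idx m; rewrite tE t'E; case: same_idx => -> -> -> ->.
Qed.

Lemma rho_G_of_sol_fresh a l :
  sol_PiS2 rho a -> (forall c, a l <> col c) -> rho a.
Proof.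
move=> a_sol fresh.
have [t rho_t a_t] : exists2 t, rho t & a =1 t.
  apply: (sol_PiS2_eq_tuple (l := l) a_sol) => t t' rho_t rho_t' tl t'l.
  by apply: (rho_G_fresh_key (l := l) rho_t rho_t'); rewrite tl ?t'l.
exact: rho_G_ext rho_t.
Qed.

Lemma rho_tuple_in_rho_G i j x y : valid_idx e i j x y -> rho (rho_tuple i j x y).
Proof. by move=> v; exists i, j, x, y. Qed.

Section Colouring.

Variable f : 'I_n -> color.
Hypothesis f_proper : forall u v, e u v -> f u != f v.

Lemma rho_G_colouring_pair u v :
  u != v -> exists2 t, rho t & t u = col (f u) /\ t v = col (f v).
Proof.
have pair_lt (w w' : 'I_n) :
    (w < w')%N -> exists2 t, rho t & t w = col (f w) /\ t w' = col (f w').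
  move=> ww'; have valid_ww' : valid_idx e w w' (f w) (f w').
    by split=> //; rewrite /r_ij; case: ifP => // /f_proper.
  exists (rho_tuple w w' (f w) (f w')); first exact: rho_tuple_in_rho_G.
  by rewrite /rho_tuple eqxx ifN ?eqxx // neq_ltn ww' orbT.
rewrite neq_ltn => /orP [/pair_lt // | /pair_lt [t rho_t [tv tu]]].
by exists t.
Qed.

Lemma sol_PiS2_colouring : (1 < n)%N -> sol_PiS2 rho (col \o f).
Proof.
move=> n_gt1; apply/sol_PiS2P => u v.
have [<- | uv] := eqVneq u v; last exact: rho_G_colouring_pair.
have [w uw] : exists w, u != w.
  have /card_gt1P [w1 [w2 [_ _ w12]]] : (1 < #|'I_n|)%N by rewrite card_ord.
  by case: (eqVneq u w1) => [-> | ]; [exists w2 | exists w1].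
by have [t rho_t [tu _]] := rho_G_colouring_pair uw; exists t.
Qed.

End Colouring.

Lemma proper_colouring_of_sol a f :
  symmetric e -> irreflexive e -> sol_PiS2 rho a -> (forall l, a l = col (f l)) ->
  forall u v, e u v -> f u != f v.
Proof.
move=> e_sym e_irr /sol_PiS2P a_pairs af u v.
wlog uv : u v / (u < v)%N.
  move=> proper e_uv; case: (ltngtP u v) => [uv | vu | /val_inj u_v].
  - exact: proper.
  - by rewrite eq_sym; apply: proper; rewrite // e_sym.
  - by rewrite u_v e_irr in e_uv.
have [t rho_t [tu tv]] := a_pairs u v; rewrite !af in tu tv.
by move: (rho_G_colour_pair uv rho_t tu tv); rewrite /r_ij => /[swap] ->.
Qed.

End ConstraintOfGraph.

Theorem mainTheorem9 (n : nat) (e : rel 'I_n) (D : Type)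
  (col : color -> D) (d : 'I_n -> 'I_n -> color -> color -> D) :
  (3 <= n)%N ->
  simple_graph e ->
  injective col ->
  (forall i j x y i' j' x' y', valid_idx e i j x y -> valid_idx e i' j' x' y' ->
     d i j x y = d i' j' x' y' -> (i, j, x, y) = (i', j', x', y')) ->
  (forall i j x y c, valid_idx e i j x y -> d i j x y <> col c) ->
  ((~ forall a, sol_PiS2 (rho_G e col d) a <-> rho_G e col d a) <->
   three_colorable e).
Proof.
move=> n_ge3 [e_sym e_irr] col_inj d_inj d_fresh.
split=> [sol_neq_rho | [f f_proper] sol_eq_rho].
- have [a [a_sol a_notin]] : exists a, sol_PiS2 (rho_G e col d) a /\ ~ rho_G e col d a.
    apply: NNPP => no_a; apply: sol_neq_rho => a.
    split=> [a_sol | ]; last exact: sol_PiS2_of_rel.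
    by apply: NNPP => a_notin; apply: no_a; exists a.
  have a_colours l : exists c, a l = col c.
    apply: NNPP => a_l; apply: a_notin.
    by apply: (rho_G_of_sol_fresh d_inj (l := l) a_sol) => c a_l_c; apply: a_l; exists c.
  have [f a_f] := choice _ a_colours.
  by exists f; apply: (proper_colouring_of_sol col_inj d_fresh e_sym e_irr a_sol).
- have a_sol := sol_PiS2_colouring col d f_proper (leq_trans (isT : 1 < 3)%N n_ge3).
  have [l] := rho_G_fresh_position d_fresh n_ge3 ((sol_eq_rho _).1 a_sol).
  by apply.
Qed.
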